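(* Let $h,v$ be permutations of $\Lambda=\{1,\dots,d\}$ and let $(\lambda_n,\epsilon_n)_{n\in\mathbb{Z}}$ be a combinatorial lift of a Sturmian sequence $\epsilon\in\{H,V\}^{\mathbb{Z}}$. Let $M$ be the minimal number of $H$'s between two consecutive $V$'s in $\epsilon$, let $(n_i)_{i\in\mathbb{Z}}$ be the increasing enumeration of the indices $n$ with $\epsilon_n=V$, and set $\mu_i=\lambda_{n_i}$, $\sigma_i=L$ if $n_{i+1}-n_i=M+1$ and $\sigma_i=R$ if $n_{i+1}-n_i=M+2$. Then the sequence $(\mu_i,\sigma_i)_{i\in\mathbb{Z}}$ is minimal.
   Context: A Sturmian sequence is a biinfinite sequence over two letters that is not eventually periodic and has exactly $n+1$ distinct subwords of each length $n$; in a Sturmian cutting sequence every block of $H$'s between consecutive $V$'s has length $M$ or $M+1$. A combinatorial lift of $\epsilon$ (a cutting sequence of a geodesic on the square torus, whose top/bottom edge is labeled $V$ and left/right edges $H$) is a sequence $(\lambda_n,\epsilon_n)$ with $\lambda_{n+1}=h(\lambda_n)$ if $\epsilon_{n+1}=H$ and $\lambda_{n+1}=v(\lambda_n)$ if $\epsilon_{n+1}=V$. A biinfinite sequence is minimal if for every finite word $w$ occurring in it there is $N$ such that every subword of length at least $N$ contains $w$. *)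

From HB Require Import structures.
From mathcomp Require Import all_boot all_order all_algebra all_fingroup.
Set Implicit Arguments. Unset Strict Implicit. Unset Printing Implicit Defensive.
Import Order.TTheory GRing.Theory Num.Theory.
Local Open Scope ring_scope.

(* Letters of the cutting sequence: H (horizontal side), V (vertical side). *)
Inductive HV := H | V.
Definition HV_to_bool (a : HV) : bool := if a is V then true else false.
Definition bool_to_HV (b : bool) : HV := if b then V else H.
Lemma HV_boolK : cancel HV_to_bool bool_to_HV. Proof. by case. Qed.
HB.instance Definition _ := Equality.copy HV (can_type HV_boolK).

Inductive LR := L | R.
Definition LR_to_bool (a : LR) : bool := if a is R then true else false.
Definition bool_to_LR (b : bool) : LR := if b then R else L.
Lemma LR_boolK : cancel LR_to_bool bool_to_LR. Proof. by case. Qed.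
HB.instance Definition _ := Equality.copy LR (can_type LR_boolK).

Definition subw (T : Type) (x : int -> T) (k : int) (n : nat) : seq T :=
  mkseq (fun i => x (k + i%:Z)) n.

Definition eventually_periodic (T : Type) (x : int -> T) : Prop :=
  exists p : nat, (0 < p)%N /\ exists N : int,
    forall n : int, N <= n -> x (n + p%:Z) = x n.

Definition complexity_n_plus_1 (T : eqType) (x : int -> T) : Prop :=
  forall n : nat, exists s : seq (seq T),
    [/\ uniq s, size s = n.+1 &
        forall w, w \in s <-> exists k : int, subw x k n = w].

Definition sturmian (T : eqType) (x : int -> T) : Prop :=
  ~ eventually_periodic x /\ complexity_n_plus_1 x.

Definition comb_lift (d : nat) (h v : {perm 'I_d}) (lam : int -> 'I_d)
    (eps : int -> HV) : Prop :=
  forall n : int, lam (n + 1) = (if eps (n + 1) == H then h (lam n) else v (lam n)).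

Definition minimal_seq (T : eqType) (x : int -> T) : Prop :=
  forall w : seq T, (exists k : int, subw x k (size w) = w) ->
    exists N : nat, forall (k : int) (m : nat), (N <= m)%N -> infix w (subw x k m).

Definition derived_seq (d : nat) (lam : int -> 'I_d) (nn : int -> int) (M : nat)
    (i : int) : 'I_d * LR :=
  (lam (nn i), if nn (i + 1) - nn i == (M.+1)%:Z then L else R).

(* A Sturmian sequence has at most one right special factor of each length n (by counting
   factors), and one occurs among any n + 1 consecutive positions: otherwise the next letter is
   a function of the previous n letters from some point on, and the sequence is eventually
   periodic. If a factor w of length n missed arbitrarily long windows, then inside such a window
   the special factor could only be followed by the letter not leading to w, so the window would
   again be periodic, with a period dividing (n + 1)!. Long windows with a common period force
   the special factors, and then the whole sequence, to be eventually periodic. Hence eps is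
   minimal.
   The label lam n is the image of lam 0 under the holonomy, a product of h's and v's. When the
   block of eps around a0 returns at a0 + s, the holonomy of the return composes with those of
   nearby returns; in the finite group of permutations a power of it is its inverse, which
   yields returns with trivial holonomy at bounded gaps. Hence the lift (lam, eps) is minimal.
   Finally each derived letter is read off from the lift between consecutive V's, so the
   occurrences of a block of the lift starting at a V give occurrences of a derived word. *)

From HB Require Import structures.
From mathcomp Require Import all_boot all_order all_algebra all_fingroup.
From mathcomp Require Import zify.
From Stdlib Require Import Classical.
Import Order.TTheory GRing.Theory Num.Theory.
Local Open Scope ring_scope.
Set Implicit Arguments. Unset Strict Implicit.

Section Subwords.

Variable T : Type.
Implicit Types (x y : int -> T) (a b k : int).

Lemma size_subw x k n : size (subw x k n) = n.
Proof. exact: size_mkseq. Qed.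

Lemma subw_eqP x y a b n :
  subw x a n = subw y b n <-> forall i, (i < n)%N -> x (a + i%:Z) = y (b + i%:Z).
Proof.
split=> [E i lt_in | E].
  by have := congr1 (nth (x a) ^~ i) E; rewrite /subw !nth_mkseq.
apply: (@eq_from_nth _ (x a)) => [|i]; rewrite !size_subw // => lt_in.
by rewrite /subw !nth_mkseq // E.
Qed.

Lemma subwS x k n : subw x k n.+1 = rcons (subw x k n) (x (k + n%:Z)).
Proof. exact: mkseqS. Qed.

Lemma subw_add x k n1 n2 :
  subw x k (n1 + n2) = subw x k n1 ++ subw x (k + n1%:Z) n2.
Proof.
apply: (@eq_from_nth _ (x k)) => [|i]; first by rewrite size_cat !size_subw.
rewrite size_subw => lt_i; rewrite nth_cat size_subw /subw nth_mkseq //.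
case: ltnP => le_i; rewrite nth_mkseq //; last lia.
by rewrite -addrA -PoszD subnKC.
Qed.

Lemma subw_shift1 x a b n :
  subw x a n.+1 = subw x b n.+1 -> subw x (a + 1) n = subw x (b + 1) n.
Proof.
move=> /subw_eqP E; apply/subw_eqP => i lt_in.
by have := E i.+1 lt_in; rewrite -!addrA (_ : 1 + i%:Z = i.+1%:Z) //; lia.
Qed.

End Subwords.

Lemma infix_subwP (T : eqType) (x : int -> T) w k m :
  reflect (exists2 b : nat, (b + size w <= m)%N & subw x (k + b%:Z) (size w) = w)
          (infix w (subw x k m)).
Proof.
apply: (iffP (@infixP _ w (subw x k m))) => [[s [s' E]] | [b le_bm <-]].
  have le_sm : (size s + size w <= m)%N.
    by rewrite -(size_subw x k m) E !size_cat addnA leq_addr.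
  exists (size s) => //; move: E; rewrite -(subnKC le_sm) !subw_add -!catA.
  by move/(congr1 (take (size w) \o drop (size s))); rewrite /= !drop_size_cat
    ?size_subw // !take_size_cat ?size_subw.
exists (subw x k b), (subw x (k + (b + size w)%:Z) (m - (b + size w))).
by rewrite catA -subw_add -subw_add subnKC.
Qed.

Lemma infix_subw_prefix (T : eqType) (x : int -> T) k n m :
  (n <= m)%N -> infix (subw x k n) (subw x k m).
Proof. by move=> le_nm; rewrite -(subnKC le_nm) subw_add prefix_infix. Qed.

Definition factor (T : Type) (x : int -> T) (u : seq T) : Prop :=
  exists k, subw x k (size u) = u.

Lemma factor_subw (T : Type) (x : int -> T) k n : factor x (subw x k n).
Proof. by exists k; rewrite size_subw. Qed.

Definition window_periodic (T : Type) (x : int -> T) (P : nat) (k : int) (m : nat) :=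
  forall i : nat, (i + P < m)%N -> x (k + (i + P)%:Z) = x (k + i%:Z).

Section WindowPeriodic.

Variables (T : Type) (x : int -> T).

Lemma window_periodicW P k m m' :
  (m' <= m)%N -> window_periodic x P k m -> window_periodic x P k m'.
Proof. by move=> le_m per i lt_i; apply: per; apply: leq_trans le_m. Qed.

Lemma window_periodic_at P k m a : window_periodic x P k m ->
  k <= a -> a + P%:Z < k + m%:Z -> x (a + P%:Z) = x a.
Proof.
move=> per le_ka lt_a; have := per (absz (a - k)) ltac:(lia).
rewrite PoszD addrA; have -> // : k + (absz (a - k))%:Z = a by lia.
Qed.

Lemma window_periodic_dvd P Q k m :
  (P %| Q)%N -> window_periodic x P k m -> window_periodic x Q k m.
Proof.
move=> /dvdnP[q ->] per; elim: q => [|q IH] i; first by rewrite mul0n addn0.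
rewrite mulSn addnCA addnC => lt_i.
by rewrite per ?IH //; apply: leq_ltn_trans lt_i; rewrite leq_addr.
Qed.

Lemma window_periodic_of_next_eq c n L (i j : nat) :
  (forall b1 b2 : nat, (b1 < L)%N -> (b2 < L)%N ->
     subw x (c + b1%:Z) n = subw x (c + b2%:Z) n ->
     x (c + b1%:Z + n%:Z) = x (c + b2%:Z + n%:Z)) ->
  (i < j)%N -> subw x (c + i%:Z) n = subw x (c + j%:Z) n ->
  window_periodic x (j - i) (c + (i + n)%:Z) (L - i).
Proof.
move=> next lt_ij Eij.
have shift t : (j + t <= L)%N -> subw x (c + (i + t)%:Z) n = subw x (c + (j + t)%:Z) n.
  elim: t => [|t IH] le_t; first by rewrite !addn0.
  have IH' := IH ltac:(lia).
  rewrite !addnS -!(addn1 (_ + t)) !(PoszD (_ + t) 1) !addrA; apply: subw_shift1.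
  by rewrite !subwS IH' (next (i + t)%N (j + t)%N) //; lia.
move=> q lt_q.
rewrite (_ : _ + (q + _)%:Z = c + (j + q)%:Z + n%:Z); last lia.
rewrite (_ : _ + q%:Z = c + (i + q)%:Z + n%:Z); last lia.
by apply: next; rewrite ?shift //; lia.
Qed.

End WindowPeriodic.

Lemma classical_ex_minn (P : nat -> Prop) :
  (exists n, P n) -> exists n, P n /\ forall m, (m < n)%N -> ~ P m.
Proof.
move=> [N PN]; elim/ltn_ind: N PN => N IH PN.
have [[m [lt_mN Pm]] | none] := classic (exists m, (m < N)%N /\ P m).
  exact: IH lt_mN Pm.
by exists N; split=> // m lt_mN Pm; apply: none; exists m.
Qed.

Definition right_special (x : int -> HV) (u : seq HV) : Prop :=
  factor x (rcons u H) /\ factor x (rcons u V).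

Section RightSpecial.

Variable x : int -> HV.
Implicit Types (a b k p : int) (u : seq HV).

Lemma next_letter_eq a b n : subw x a n = subw x b n ->
  ~ right_special x (subw x a n) -> x (a + n%:Z) = x (b + n%:Z).
Proof.
move=> E ns; apply: NNPP => ne; apply: ns.
have := factor_subw x a n.+1; have := factor_subw x b n.+1.
rewrite !subwS -E; move: ne.
by case: (x (a + n%:Z)); case: (x (b + n%:Z)).
Qed.

Lemma subw_next_eq a b n : subw x a n = subw x b n ->
  ~ right_special x (subw x a n) -> subw x (a + 1) n = subw x (b + 1) n.
Proof.
by move=> E ns; apply: subw_shift1; rewrite !subwS E (next_letter_eq E ns).
Qed.

Lemma nonspecial_cycle_periodic p n (dd : nat) : (0 < dd)%N ->
  subw x (p + dd%:Z) n = subw x p n ->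
  (forall r, (r < dd)%N -> ~ right_special x (subw x (p + r%:Z) n)) ->
  eventually_periodic x.
Proof.
move=> dd_gt0 E ns.
have cycle t : exists2 r, (r < dd)%N & subw x (p + t%:Z) n = subw x (p + r%:Z) n.
  elim: t => [|t [r lt_r IH]]; first by exists 0%N.
  have := subw_next_eq IH; rewrite IH => /(_ (ns r lt_r)).
  rewrite -!addrA -!PoszD !addn1 => ->.
  case: (ltnP r.+1 dd) => [|le_dd]; first by exists r.+1.
  by exists 0%N; rewrite // addr0 -E; do 2 f_equal; lia.
have nsp t : ~ right_special x (subw x (p + t%:Z) n).
  by have [r lt_r ->] := cycle t; apply: ns.
have shift t : subw x (p + (t + dd)%:Z) n = subw x (p + t%:Z) n.
  elim: t => [|t IH]; first by rewrite add0n addr0.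
  have := subw_next_eq IH (nsp (t + dd)%N).
  by rewrite -!addrA -!PoszD !addn1 addSn.
exists dd; split=> //; exists (p + n%:Z) => q le_q.
have [t ->] : exists t : nat, q = p + t%:Z + n%:Z by exists (absz (q - p - n%:Z)%R); lia.
have := next_letter_eq (shift t) (nsp _).
by rewrite (_ : p + t%:Z + n%:Z + dd%:Z = p + (t + dd)%N%:Z + n%:Z) //; lia.
Qed.

Lemma subw_eq_nonspecial_run a b n D : subw x a n = subw x b n ->
  (forall e, (e < D)%N -> ~ right_special x (subw x (b + e%:Z) n)) ->
  subw x (a + D%:Z) n = subw x (b + D%:Z) n.
Proof.
move=> E ns; elim: D ns => [|D IH] ns; first by rewrite !addr0.
have IH' := IH (fun e lt_e => ns e (ltnW lt_e)).
rewrite -addn1 !PoszD !addrA; apply: (subw_next_eq IH').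
by rewrite IH'; apply: ns.
Qed.

Lemma subw_eq_nonspecial_until t0 d n p :
  (forall d', (d' < d)%N -> ~ right_special x (subw x (t0 - d'%:Z) n)) ->
  subw x p n.+1 = subw x (t0 - d%:Z) n.+1 -> subw x (p + d%:Z) n = subw x t0 n.
Proof.
case: d => [|d] nonspecial; first by rewrite !subwS subr0 addr0 => /rcons_inj[].
move=> /subw_shift1/(@subw_eq_nonspecial_run _ _ _ d) E.
rewrite (_ : p + _ = p + 1 + d%:Z); last lia.
rewrite [in RHS](_ : t0 = t0 - d.+1%:Z + 1 + d%:Z); last lia.
apply: E => e lt_e; rewrite (_ : _ + e%:Z = t0 - (d - e)%N%:Z); last lia.
by apply: nonspecial; lia.
Qed.

Hypothesis cx : complexity_n_plus_1 x.

Lemma subw_repeat n (f : nat -> int) :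
  exists i j, (i < j <= n.+1)%N /\ subw x (f i) n = subw x (f j) n.
Proof.
have [s [_ size_s mem_s]] := cx n.
pose ws := [seq subw x (f i) n | i <- iota 0 n.+2].
have ws_s : {subset ws <= s} by move=> _ /mapP[i _ ->]; apply/mem_s; exists (f i).
have : ~~ uniq ws.
  by apply/negP => /uniq_leq_size/(_ ws_s); rewrite size_map size_iota size_s ltnn.
case/(uniqPn [::]) => i [j [lt_ij]]; rewrite size_map size_iota => lt_j.
have lt_i := ltn_trans lt_ij lt_j.
rewrite !(nth_map 0%N) ?size_iota ?nth_iota // => E.
by exists i, j; split; first lia.
Qed.

Lemma right_special_uniq u u' : size u = size u' ->
  right_special x u -> right_special x u' -> u = u'.
Proof.
move=> size_u [uH uV] [u'H u'V]; apply: NNPP => ne.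
set n := size u; have [s [uniq_s size_s mem_s]] := cx n.
have [s1 [uniq_s1 size_s1 mem_s1]] := cx n.+1.
have factor_mem v : size v = n.+1 -> factor x v -> v \in s1.
  by move=> size_v [k]; rewrite size_v => Ek; apply/mem_s1; exists k.
(* Extending every factor of length n by one letter gives n + 1 distinct factors of length
   n + 1; two distinct special factors would contribute two more. *)
pose ext v := if rcons v H \in s1 then rcons v H else rcons v V.
have ext_inj : injective ext.
  by move=> v1 v2; rewrite /ext; do 2 case: ifP => _; move/rcons_inj => [].
have ext_in v : v \in s -> ext v \in s1.
  case/mem_s => k <-; rewrite /ext; case: ifP => // notH.
  have := factor_mem _ (size_subw x k n.+1) (factor_subw x k n.+1).
  by rewrite subwS; case: (x _) => //; rewrite notH.
have Vext_notin v : right_special x v -> size v = n -> rcons v V \notin map ext s.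
  move=> [vH _] size_v; apply/mapP => -[v' _]; rewrite /ext.
  case: ifP => [_ | notH /rcons_inj/(congr1 fst) /= E].
    by move/(congr1 (last H)); rewrite !last_rcons.
  by rewrite -E factor_mem ?size_rcons ?size_v in notH.
have uniq_l : uniq [:: rcons u V, rcons u' V & map ext s].
  rewrite /= inE negb_or (map_inj_uniq ext_inj) uniq_s !Vext_notin ?andbT //;
    try by split.
  by rewrite eqseq_rcons eqxx andbT; apply/eqP.
have sub_l : {subset [:: rcons u V, rcons u' V & map ext s] <= s1}.
  move=> v; rewrite !inE => /or3P[/eqP-> | /eqP-> | /mapP[v' /ext_in + ->]] //.
  - by rewrite factor_mem // size_rcons.
  - by rewrite factor_mem // size_rcons -size_u.
by have := uniq_leq_size uniq_l sub_l; rewrite /= size_map size_s size_s1 ltnn.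
Qed.

Hypothesis aperiodic : ~ eventually_periodic x.

Lemma right_special_occurs k n :
  exists2 s, (s <= n)%N & right_special x (subw x (k + s%:Z) n).
Proof.
apply: NNPP => none; apply: aperiodic.
have [i [j [/andP[lt_ij le_j] Eij]]] := subw_repeat n (fun i => k + i%:Z).
apply: (@nonspecial_cycle_periodic (k + i%:Z) n (j - i)); first by rewrite subn_gt0.
  by rewrite -addrA -PoszD subnKC ?Eij // ltnW.
move=> r lt_r special_r; apply: none; exists (i + r)%N; first lia.
by rewrite PoszD addrA.
Qed.

Section LongPeriodicWindows.

Variable P : nat.
Hypothesis long_windows : forall m, exists k, window_periodic x P k m.

Lemma right_special_window_periodic s n :
  right_special x (subw x s n) -> window_periodic x P s n.
Proof.
move=> special_s i lt_i; have [k per] := long_windows (n + n).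
have [s0 le_s0 special_s0] := right_special_occurs k n.
have /subw_eqP E : subw x (k + s0%:Z) n = subw x s n.
  by apply: right_special_uniq; rewrite ?size_subw.
rewrite -!E; try lia.
by rewrite -!addrA -!PoszD addnA per //; lia.
Qed.

Lemma long_periodic_windows_absurd : (0 < P)%N -> False.
Proof.
move=> P_gt0; apply: aperiodic; exists P; split=> //.
have [[b defect] | no_defect] := classic (exists b, x (b + P%:Z) <> x b); last first.
  by exists 0 => t _; apply: NNPP => ne; apply: no_defect; exists t.
exists (b + P%:Z + 1) => t le_t; set n := absz (t + P%:Z - b)%R.
have [s le_s /right_special_window_periodic per] :=
  right_special_occurs (b + P%:Z + 1 - n%:Z) n.
(* The P-periodic special factor cannot cover both b and b + P, so it covers t and t + P. *)
have [le_sb | lt_bs] := lerP (b + P%:Z + 1 - n%:Z + s%:Z) b.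
  by case: defect; apply: (window_periodic_at per) => //; lia.
by apply: (window_periodic_at per); lia.
Qed.

End LongPeriodicWindows.

Lemma sturmian_minimal : minimal_seq x.
Proof.
move=> w [t0 Ew]; set n := size w in Ew *; apply: NNPP => not_min.
have gap N : exists c, ~ infix w (subw x c N).
  apply: NNPP => none; apply: not_min; exists N => k m le_Nm.
  apply: infix_trans (infix_subw_prefix x k le_Nm).
  by apply: NNPP => not_inf; apply: none; exists k.
have [d [special_d nonspecial]] :
    exists d, right_special x (subw x (t0 - d%:Z) n) /\
      forall d', (d' < d)%N -> ~ right_special x (subw x (t0 - d'%:Z) n).
  apply: classical_ex_minn; have [s le_s special_s] := right_special_occurs (t0 - n%:Z) n.
  by exists (n - s)%N; rewrite (_ : t0 - _ = t0 - n%:Z + s%:Z) //; lia.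
apply: (@long_periodic_windows_absurd (n.+1)`!) (fact_gt0 _) => L.
set L' := (L + n.+1)%N; have [c gap_c] := gap (L' + d + n)%N.
have avoid (b : nat) : (b < L')%N -> subw x (c + b%:Z) n = subw x (t0 - d%:Z) n ->
    x (c + b%:Z + n%:Z) <> x (t0 - d%:Z + n%:Z).
  move=> lt_b Eb Ex; apply: gap_c; apply/infix_subwP; exists (b + d)%N; first lia.
  rewrite PoszD addrA -Ew size_subw; apply: (subw_eq_nonspecial_until nonspecial).
  by rewrite !subwS Eb Ex.
(* In a window avoiding w, the special factor is never followed by the letter leading to w,
   so the next letter is a function of the previous n letters. *)
have next (b1 b2 : nat) : (b1 < L')%N -> (b2 < L')%N ->
    subw x (c + b1%:Z) n = subw x (c + b2%:Z) n ->
    x (c + b1%:Z + n%:Z) = x (c + b2%:Z + n%:Z).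
  move=> lt_b1 lt_b2 E12.
  have [special_b1 | ] := classic (right_special x (subw x (c + b1%:Z) n)); last first.
    exact: next_letter_eq.
  have E1 : subw x (c + b1%:Z) n = subw x (t0 - d%:Z) n.
    by apply: right_special_uniq; rewrite ?size_subw.
  have := avoid _ lt_b1 E1; have := avoid _ lt_b2; rewrite -E12 => /(_ E1).
  by case: (x (c + b1%:Z + _)); case: (x (c + b2%:Z + _)); case: (x (t0 - _ + _)).
have [i [j [/andP[lt_ij le_j] Eij]]] := subw_repeat n (fun i => c + i%:Z).
exists (c + (i + n)%:Z); apply: (@window_periodic_dvd _ _ (j - i)).
  by apply: dvdn_fact; lia.
by apply: window_periodicW (window_periodic_of_next_eq next lt_ij Eij); lia.
Qed.

End RightSpecial.

Definition agree_near (T : Type) (x : int -> T) (a b : int) (r : nat) :=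
  forall i : int, `|i| <= r%:Z -> x (a + i) = x (b + i).

Section Holonomy.

Variables (gT : finGroupType) (f : int -> gT).
Implicit Types (a b c t : int).

Fixpoint holonomy_pos (k : nat) : gT :=
  if k is k'.+1 then (holonomy_pos k' * f k%:Z)%g else 1%g.

Fixpoint holonomy_neg (k : nat) : gT :=
  if k is k'.+1 then (holonomy_neg k' * (f (- k'%:Z))^-1)%g else 1%g.

(* holonomy z = f 1 * ... * f z, and holonomy (- k) = (f (1 - k) * ... * f 0)^-1; recall that
   Negz k stands for - k.+1. *)
Definition holonomy (z : int) : gT :=
  match z with Posz k => holonomy_pos k | Negz k => holonomy_neg k.+1 end.

Lemma holonomyS z : holonomy (z + 1) = (holonomy z * f (z + 1))%g.
Proof.
case: z => [k | [|k]]; first by rewrite (_ : Posz k + 1 = k.+1%:Z) //; lia.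
  by rewrite /= oppr0 mul1g mulVg.
have -> : Negz k.+1 + 1 = Negz k by rewrite !NegzE; lia.
by rewrite [holonomy (Negz k.+1)]/= -mulgA NegzE mulVg mulg1.
Qed.

Definition transport a b : gT := ((holonomy a)^-1 * holonomy b)%g.

Lemma transport_mul a b c : (transport a b * transport b c)%g = transport a c.
Proof. by rewrite /transport mulgA -(mulgA _ (holonomy b)) mulgV mulg1. Qed.

Lemma transportV a b : (transport a b)^-1%g = transport b a.
Proof. by rewrite /transport invMg invgK. Qed.

Lemma transportS a b : transport a (b + 1) = (transport a b * f (b + 1))%g.
Proof. by rewrite /transport holonomyS mulgA. Qed.

Lemma transport_shift a b t :
  agree_near f a b (absz t) -> transport a (a + t) = transport b (b + t).
Proof.
have shift_nat (k : nat) a' b' :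
    (forall j : nat, (j <= k)%N -> f (a' + j%:Z) = f (b' + j%:Z)) ->
    transport a' (a' + k%:Z) = transport b' (b' + k%:Z).
  elim: k => [|k IH] agr; first by rewrite !addr0 /transport !mulVg.
  rewrite -addn1 PoszD !addrA !transportS IH => [|j le_j]; last exact/agr/leqW.
  by rewrite -!addrA -PoszD agr // addn1.
case: (lerP 0 t) => [t_ge0 | t_lt0].
  have [k ->] : exists k : nat, t = k%:Z by exists (absz t); lia.
  by move=> agr; apply: shift_nat => j le_j; apply: agr; lia.
have [k ->] : exists k : nat, t = - k%:Z by exists (absz t); lia.
move=> agr; rewrite -(transportV (a - k%:Z)) -(transportV (b - k%:Z)).
rewrite -{2}(addrNK k%:Z a) -{2}(addrNK k%:Z b) (shift_nat k (a - k%:Z) (b - k%:Z)) //.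
by move=> j le_j; rewrite -!addrA; apply: agr; lia.
Qed.

Lemma transport_add a s t : agree_near f (a + s) a (absz t) ->
  transport a (a + (s + t)) = (transport a (a + s) * transport a (a + t))%g.
Proof. by move=> agr; rewrite addrA -(transport_mul _ (a + s)) (transport_shift agr). Qed.

End Holonomy.

Definition letter_perm d (h v : {perm 'I_d}) (e : HV) : {perm 'I_d} :=
  if e == H then h else v.

Lemma comb_lift_transport d (h v : {perm 'I_d}) lam eps :
  comb_lift h v lam eps ->
  forall a b, lam b = transport (letter_perm h v \o eps) a b (lam a).
Proof.
set f := letter_perm h v \o eps => cl.
have lam_hol z : lam z = holonomy f z (lam 0).
  elim/int_rect: z => [|k IH|k IH]; first by rewrite perm1.
    by rewrite -addn1 PoszD cl holonomyS permM -IH /f /letter_perm /=; case: ifP.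
  have e : - k.+1%:Z + 1 = - k%:Z by lia.
  have := cl (- k.+1%:Z); have := holonomyS f (- k.+1%:Z); rewrite e => hol_k cl_k.
  apply: (@perm_inj _ (f (- k%:Z))).
  by rewrite -permM -hol_k -IH cl_k /f /letter_perm /=; case: ifP.
by move=> a b; rewrite [lam b]lam_hol [lam a]lam_hol /transport permM permK.
Qed.

Lemma finite_uniform_bound (T : finType) (Q : T -> nat -> Prop) :
  (forall g K K', (K <= K')%N -> Q g K -> Q g K') ->
  (forall g, exists K, Q g K) -> exists K, forall g, Q g K.
Proof.
move=> mono ex; suff [K QK] : exists K, forall g, g \in enum T -> Q g K.
  by exists K => g; apply: QK; rewrite mem_enum.
elim: (enum T) => [|g s [K QK]]; first by exists 0%N.
have [Kg QKg] := ex g; exists (maxn K Kg) => g'; rewrite inE => /orP[/eqP-> | g's].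
  exact: mono (leq_maxr _ _) QKg.
exact: mono (leq_maxl _ _) (QK _ g's).
Qed.

Section MinimalReturn.

Variables (T : eqType) (gT : finGroupType) (x : int -> T) (phi : T -> gT).
Hypothesis minimal_x : minimal_seq x.

Lemma minimal_trivial_return a0 (R : nat) :
  exists N, forall c, exists2 b : nat, (b <= N)%N &
    agree_near x (c + b%:Z) a0 R /\ transport (phi \o x) a0 (c + b%:Z) = 1%g.
Proof.
pose K s := transport (phi \o x) a0 (a0 + s).
have K_mul r s t : agree_near x (a0 + s) a0 r -> (absz t <= r)%N ->
    K (s + t) = (K s * K t)%g.
  by move=> agr le_t; apply: transport_add => i le_i /=; rewrite agr //; lia.
pose returns g := exists t, agree_near x (a0 + t) a0 R /\ K t = g.
have [K0 bounded] : exists K0, forall g, returns g ->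
    exists t, [/\ (absz t <= K0)%N, agree_near x (a0 + t) a0 R & K t = g].
  apply: finite_uniform_bound => [g k k' le_k Q /Q[t [le_t agr Kt]] | g].
    by exists t; split=> //; apply: leq_trans le_k.
  have [[t [agr Kt]] | none] := classic (returns g); last by exists 0%N.
  by exists (absz t) => _; exists t.
set R' := (R + K0)%N.
have [N occurs] := minimal_x (factor_subw x (a0 - R'%:Z) (R' + R').+1).
exists N => c; have := occurs c N (leqnn N).
move=> /infix_subwP[sg]; rewrite size_subw => le_sg /subw_eqP Esg.
set s := c + sg%:Z + R'%:Z - a0.
have agr_s : agree_near x (a0 + s) a0 R'.
  move=> i le_i; have := Esg (absz (R'%:Z + i)) ltac:(lia).
  have -> : c + sg%:Z + (absz (R'%:Z + i))%:Z = a0 + s + i by rewrite /s; lia.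
  by have -> : a0 - R'%:Z + (absz (R'%:Z + i))%:Z = a0 + i by lia.
have agr_step t : (absz t <= K0)%N -> agree_near x (a0 + t) a0 R ->
    agree_near x (a0 + (s + t)) a0 R.
  move=> le_t agr i le_i; rewrite (_ : _ + i = a0 + s + (t + i)); last by rewrite !addrA.
  by rewrite agr_s ?addrA ?agr //; lia.
(* Returns are closed under left multiplication by K s, hence K s ^-1 = K s ^+ #[K s].-1 is a
   return, at some t, and s + t is a return with trivial holonomy. *)
have powers j : returns (K s ^+ j)%g.
  elim: j => [|j /bounded[t [le_t agr Kt]]].
    by exists 0; rewrite /K !addr0 /transport mulVg.
  exists (s + t); split; first exact: agr_step.
  by rewrite (K_mul R') ?Kt ?expgS //; lia.
have [t [le_t agr Kt]] := bounded _ (powers #[K s]%g.-1).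
exists (absz (sg%:Z + R'%:Z + t)); first lia.
rewrite (_ : c + _ = a0 + (s + t)); last lia.
split; first exact: agr_step.
by rewrite -/(K _) (K_mul R') ?Kt -?invg_expg ?mulgV //; lia.
Qed.

End MinimalReturn.

Lemma comb_lift_minimal d (h v : {perm 'I_d}) lam eps :
  minimal_seq eps -> comb_lift h v lam eps -> minimal_seq (fun n => (lam n, eps n)).
Proof.
move=> minimal_eps cl w [a0 Ew]; set R := size w in Ew *.
have [N ret] := minimal_trivial_return (letter_perm h v) minimal_eps a0 R.
exists (N + R)%N => c m le_m; apply/infix_subwP.
have [b le_b [agr trivial_b]] := ret c; exists b; first lia.
rewrite -Ew size_subw; apply/subw_eqP => i lt_i; have agr_i : `|i%:Z| <= R%:Z by lia.
have lam_b : lam (c + b%:Z) = lam a0 by rewrite (comb_lift_transport cl a0) trivial_b perm1.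
rewrite (comb_lift_transport cl (c + b%:Z) (c + b%:Z + i%:Z)) lam_b.
rewrite (comb_lift_transport cl a0 (a0 + i%:Z)) (transport_shift (b := a0)) ?agr //.
by move=> j le_j /=; rewrite agr //; lia.
Qed.

Section DerivedSequence.

Variables (eps : int -> HV) (nn : int -> int).
Hypothesis nn_step : forall i : int, nn i < nn (i + 1).
Hypothesis eps_V : forall n, eps n = V <-> exists i, nn i = n.

Lemma nn_addn_ge i (k : nat) : nn i + k%:Z <= nn (i + k%:Z).
Proof.
elim: k => [|k IH]; first by rewrite !addr0.
have -> : i + k.+1%:Z = i + k%:Z + 1 by lia.
by have := nn_step (i + k%:Z); lia.
Qed.

Lemma nn_sub_ge i j : i <= j -> j - i <= nn j - nn i.
Proof.
move=> le_ij; have := nn_addn_ge i (absz (j - i)).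
by rewrite (_ : i + _ = j); lia.
Qed.

Lemma nn_mono : {mono nn : i j / i < j}.
Proof.
apply/leW_mono/le_mono => i j lt_ij.
by have := nn_sub_ge (ltW lt_ij); lia.
Qed.

Lemma gap_eq (i i' : int) :
  (forall e : nat, (e%:Z <= nn (i + 1) - nn i) -> eps (nn i' + e%:Z) = eps (nn i + e%:Z)) ->
  nn (i' + 1) - nn i' = nn (i + 1) - nn i.
Proof.
move=> agr; have step := nn_step i; have step' := nn_step i'.
apply/eqP; rewrite eq_le; apply/andP; split.
  have : eps (nn i' + (absz (nn (i + 1) - nn i))%:Z) = V.
    by rewrite agr; [apply/eps_V; exists (i + 1) | ]; lia.
  case/eps_V => k Ek; have : i' < k by rewrite -nn_mono; lia.
  by move=> lt_k; have := nn_sub_ge (_ : i' + 1 <= k); lia.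
rewrite leNgt; apply/negP => lt_gap.
have : eps (nn i + (absz (nn (i' + 1) - nn i'))%:Z) = V.
  by rewrite -agr; [apply/eps_V; exists (i' + 1) | ]; lia.
case/eps_V => k Ek.
have : i < k by rewrite -nn_mono; lia.
have : k < i + 1 by rewrite -nn_mono; lia.
lia.
Qed.

Lemma nn_offsets_eq (i j : int) (m : nat) :
  (forall e : nat, e%:Z <= nn (i + m%:Z) - nn i -> eps (nn j + e%:Z) = eps (nn i + e%:Z)) ->
  forall q : nat, (q <= m)%N -> nn (j + q%:Z) - nn j = nn (i + q%:Z) - nn i.
Proof.
move=> agr; elim=> [|q IH] le_q; first by rewrite !addr0 !subrr.
have IH' := IH (ltnW le_q).
have le_o : i <= i + q%:Z by lia.
have le_m : i + q%:Z + 1 <= i + m%:Z by lia.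
move: le_o le_m => /nn_sub_ge le_o /nn_sub_ge le_m.
have gap : nn (j + q%:Z + 1) - nn (j + q%:Z) = nn (i + q%:Z + 1) - nn (i + q%:Z).
  apply: gap_eq => e le_e; set o := absz (nn (i + q%:Z) - nn i).
  have -> : nn (j + q%:Z) = nn j + o%:Z by lia.
  have -> : nn (i + q%:Z) = nn i + o%:Z by lia.
  by rewrite -!addrA -PoszD agr //; lia.
have -> : j + q.+1%:Z = j + q%:Z + 1 by lia.
have -> : i + q.+1%:Z = i + q%:Z + 1 by lia.
lia.
Qed.

Variables (d : nat) (lam : int -> 'I_d) (M : nat).

Lemma derived_subw_eq (i j : int) (m : nat) :
  subw (fun n => (lam n, eps n)) (nn j) (absz (nn (i + m%:Z) - nn i)).+1 =
    subw (fun n => (lam n, eps n)) (nn i) (absz (nn (i + m%:Z) - nn i)).+1 ->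
  subw (derived_seq lam nn M) j m = subw (derived_seq lam nn M) i m.
Proof.
set l := absz _ => /subw_eqP agr_lift.
have l_eq : l%:Z = nn (i + m%:Z) - nn i.
  by have := @nn_sub_ge i (i + m%:Z); rewrite /l; lia.
have agr (e : nat) : (e <= l)%N ->
    lam (nn j + e%:Z) = lam (nn i + e%:Z) /\ eps (nn j + e%:Z) = eps (nn i + e%:Z).
  by move=> le_e; case: (agr_lift e le_e).
have offsets : forall q : nat, (q <= m)%N -> nn (j + q%:Z) - nn j = nn (i + q%:Z) - nn i.
  by apply: nn_offsets_eq => e le_e; case: (agr e _) => //; lia.
apply/subw_eqP => q lt_q; have o_q := offsets q (ltnW lt_q).
have o_q1 := offsets q.+1 lt_q; rewrite /derived_seq; congr pair.
  have o_ge0 := @nn_sub_ge i (i + q%:Z) ltac:(lia).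
  set o := absz (nn (i + q%:Z) - nn i).
  have -> : nn (j + q%:Z) = nn j + o%:Z by rewrite /o; lia.
  have -> : nn (i + q%:Z) = nn i + o%:Z by rewrite /o; lia.
  have le_o : (o <= l)%N.
    by have := @nn_sub_ge (i + q%:Z) (i + m%:Z) ltac:(lia); rewrite /o; lia.
  by case: (agr o le_o) => ->.
have -> : j + q%:Z + 1 = j + q.+1%:Z by lia.
have -> : i + q%:Z + 1 = i + q.+1%:Z by lia.
by rewrite (_ : nn (j + q.+1%:Z) - nn (j + q%:Z) = nn (i + q.+1%:Z) - nn (i + q%:Z)) //; lia.
Qed.

Lemma derived_minimal :
  minimal_seq (fun n => (lam n, eps n)) -> minimal_seq (derived_seq lam nn M).
Proof.
move=> minimal_lift w [i Ew]; set m := size w in Ew *.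
set l := absz (nn (i + m%:Z) - nn i).
have l_eq : l%:Z = nn (i + m%:Z) - nn i.
  by have := @nn_sub_ge i (i + m%:Z); rewrite /l; lia.
have [N occurs] := minimal_lift _ (factor_subw _ (nn i) l.+1).
exists N => j m' le_m'; have /infix_subwP[b] := occurs (nn j) N (leqnn N).
rewrite size_subw => le_b Eb.
have [j' Ej'] : exists j', nn j' = nn j + b%:Z.
  apply/eps_V; move/subw_eqP: Eb => /(_ 0%N isT) [_]; rewrite !addr0 => ->.
  by apply/eps_V; exists i.
have le_jj' : ~~ (j' < j) by rewrite -nn_mono; lia.
have le_ml := @nn_sub_ge i (i + m%:Z) ltac:(lia).
have le_jb := @nn_sub_ge j j' ltac:(lia).
apply/infix_subwP; exists (absz (j' - j)); first lia.
rewrite (_ : j + _ = j'); last lia.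
by rewrite -Ew size_subw; apply: derived_subw_eq; rewrite Ej'.
Qed.

End DerivedSequence.

Unset Implicit Arguments.

Theorem corollary5p6 (d : nat) (h v : {perm 'I_d}) (eps : int -> HV)
  (lam : int -> 'I_d) (nn : int -> int) (M : nat) :
  sturmian eps ->
  comb_lift h v lam eps ->
  (* nn is the increasing enumeration of the indices n with eps n = V *)
  (forall i : int, nn i < nn (i + 1)) ->
  (forall n : int, eps n = V <-> exists i : int, nn i = n) ->
  (* M is the minimal number of H's between two consecutive V's *)
  (forall i : int, (M%:Z) <= nn (i + 1) - nn i - 1) ->
  (exists i : int, nn (i + 1) - nn i - 1 = M%:Z) ->
  minimal_seq (derived_seq lam nn M).
Proof.
move=> [aperiodic complexity] cl nn_step eps_V _ _.
apply: (derived_minimal nn_step eps_V).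
apply: comb_lift_minimal cl.
exact: sturmian_minimal.
Qed.
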